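(* Let $G$ be a finitely generated, torsion-free, $2$-step nilpotent group with Malcev basis $(A;C)=(a_1,\dots,a_n;c_1,\dots,c_m)$, $n\ge 2$. Assume $[a_i,a_j]\neq1$ for all $i\neq j$ and that $a_i$ is c-small for every $i=1,\dots,n$. Then the maximal ring of scalars of $G$ is isomorphic to $\mathbb{Z}$.
   Context: Commutators: $[g,h]=g^{-1}h^{-1}gh$. A Malcev basis is a pair $(A;C)$ with $C=\{c_1,\dots,c_m\}$ a basis of a free abelian subgroup with $G'\le\langle C\rangle\le Z(G)$ and $A=\{a_1,\dots,a_n\}$ such that $G/\langle C\rangle$ is free abelian with basis $\{a_i\langle C\rangle\}$. An element $g$ is c-small if its centralizer equals $\{g^t z\mid t\in\mathbb{Z},\ z\in Z(G)\}$. Rings are associative with identity. Let $f:G/Z(G)\times G/Z(G)\to G'$, $f(gZ(G),hZ(G))=[g,h]$. A commutative ring $R$ is a ring of scalars of $G$ if there are faithful actions of $R$ by endomorphisms on $M=G/Z(G)$ and $N=G'$ with $f(rx,y)=f(x,ry)=rf(x,y)$ for all $r\in R$, $x,y\in M$. Identifying each ring of scalars with its image in $\mathrm{End}(M)$, the maximal ring of scalars is the one containing all others. *)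

From HB Require Import structures.
From mathcomp Require Import all_boot all_algebra.
From mathcomp Require monoid.

Set Implicit Arguments.
Unset Strict Implicit.
Unset Printing Implicit Defensive.

Import GRing.Theory.

Section GroupDefs.
Variable G : groupType.

Local Notation gmul := (@monoid.mul G).
Local Notation ginv := (@monoid.inv G).
Local Notation g1 := (@monoid.one G).

Definition zexpg (g : G) (k : int) : G :=
  match k with
  | Posz n => monoid.natexp g n
  | Negz n => ginv (monoid.natexp g n.+1)
  end.

(* commutator [g,h] = g^-1 h^-1 g h  (library's monoid.commg) *)
Local Notation comm := (@monoid.commg G).

Inductive gen (S : G -> Prop) : G -> Prop :=
  | gen_one : gen S g1
  | gen_base g : S g -> gen S g
  | gen_inv g : gen S g -> gen S (ginv g)
  | gen_mul g h : gen S g -> gen S h -> gen S (gmul g h).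

Definition central (z : G) : Prop := forall g, gmul z g = gmul g z.

Definition derived : G -> Prop := gen (fun g => exists x y, g = comm x y).

Definition zprod (p : nat) (x : 'I_p -> G) (k : 'I_p -> int) : G :=
  foldr (fun j acc => gmul (zexpg (x j) (k j)) acc) g1 (enum 'I_p).

Definition span (p : nat) (x : 'I_p -> G) : G -> Prop :=
  gen (fun g => exists j, g = x j).

Definition finitely_generated : Prop :=
  exists (p : nat) (x : 'I_p -> G), forall g, span x g.

Definition torsion_free : Prop :=
  forall (g : G) (k : int), k <> 0%R -> zexpg g k = g1 -> g = g1.

(* nilpotent of class exactly 2: G' <= Z(G) and G is not abelian *)
Definition two_step_nilpotent : Prop :=
  (forall x y, central (comm x y)) /\ exists x y, comm x y <> g1.

Definition malcev_basis (n m : nat) (a : 'I_n -> G) (c : 'I_m -> G) : Prop :=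
  [/\ (
      forall g h, span c g -> span c h -> gmul g h = gmul h g) /\
      (forall k : 'I_m -> int, zprod c k = g1 -> forall j, k j = 0%R),
      (forall g, derived g -> span c g),
      (forall g, span c g -> central g),
      (* G/<C> is free abelian with basis {a_i <C>} :
         generation ... *)
      (forall g, exists k : 'I_n -> int, span c (gmul (ginv (zprod a k)) g)) &
      (* ... and independence *)
      (forall k : 'I_n -> int, span c (zprod a k) -> forall i, k i = 0%R)].

Definition c_small (g : G) : Prop :=
  forall h, gmul h g = gmul g h <->
            exists (t : int) (z : G), central z /\ h = gmul (zexpg g t) z.

End GroupDefs.

(* A faithful action of the ring R on the abelian group V by endomorphisms,
   i.e. an injective unital ring morphism R -> End(V), written out. *)
Definition faithful_endo_action (R : comPzRingType) (V : zmodType)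
    (act : R -> V -> V) : Prop :=
  [/\ (forall r x y, act r (x + y)%R = (act r x + act r y)%R),
      (forall x, act 1%R x = x),
      (forall r s x, act (r + s)%R x = (act r x + act s x)%R),
      (forall r s x, act (r * s)%R x = act r (act s x)) &
      (forall r s, (forall x, act r x = act s x) -> r = s)].

(* R (with actions actM on M = G/Z(G), actN on N = G') is a ring of scalars
   for the commutation map f : M x M -> N. *)
Definition ring_of_scalars (M N : zmodType) (f : M -> M -> N)
    (R : comPzRingType) (actM : R -> M -> M) (actN : R -> N -> N) : Prop :=
  [/\ faithful_endo_action actM, faithful_endo_action actN &
      forall r x y, f (actM r x) y = actN r (f x y) /\
                    f x (actM r y) = actN r (f x y)].

Definition quotient_by_center (G : groupType) (M : zmodType)
    (pi : G -> M) : Prop :=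
  [/\ (forall g h, pi (monoid.mul g h) = (pi g + pi h)%R),
      (forall x, exists g, pi g = x) &
      (forall g, pi g = 0%R <-> central g)].

Definition presents_derived (G : groupType) (N : zmodType)
    (iota : N -> G) : Prop :=
  [/\ (forall x y, iota (x + y)%R = monoid.mul (iota x) (iota y)),
      injective iota &
      (forall g, derived g <-> exists x, iota x = g)].

From HB Require Import structures.
From mathcomp Require Import all_boot all_algebra.
From mathcomp Require Import monoid.

Set Implicit Arguments.
Unset Strict Implicit.
Unset Printing Implicit Defensive.

Import GRing.Theory.

(* A scalar r acts on M = G/Z(G) by an additive map phi with
   f (phi u) v = r f u v = f u (phi v), f the commutator form.  Then
   f (a_i, phi a_i) = r f (a_i, a_i) = 0, so a lift of phi a_i commutes with
   a_i and c-smallness gives phi a_i = t_i a_i.  Comparing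
   f (phi a_i, a_j) = f (a_i, phi a_j) yields (t_i - t_j) f (a_i, a_j) = 0,
   hence t_i = t_j since G' is torsion-free and [a_i, a_j] <> 1.  As the a_i
   span M, phi is multiplication by one integer.  Conversely Z acts
   faithfully on M and G', which both contain elements of infinite order. *)

Section CentralCommutators.
Local Open Scope group_scope.
Variable G : groupType.
Hypothesis commg_central : forall x y : G, central [~ x, y].

Lemma commMg (x y z : G) : [~ x * y, z] = [~ x, z] * [~ y, z].
Proof.
apply: (@mulgI _ (z * (x * y))); rewrite -commgC.
move: (commgC x z) (commgC y z) (commg_central x z y).
move: [~ x, z] [~ y, z] => cxz cyz Ex Ey cxz_y.
by rewrite -mulgA Ey !mulgA Ex -(mulgA _ cxz) cxz_y !mulgA.
Qed.

Lemma commgM (x y z : G) : [~ x, y * z] = [~ x, y] * [~ x, z].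
Proof. by rewrite -invgR commMg invgM !invgR; apply: commg_central. Qed.

End CentralCommutators.

Section IntegerMultiples.
Local Open Scope ring_scope.

Lemma additive0 (U V : zmodType) (h : U -> V) :
  {morph h : x y / x + y} -> h 0 = 0.
Proof. by move=> hD; apply: (addrI (h 0)); rewrite -hD !addr0. Qed.

Lemma additive_mulrz (U V : zmodType) (h : U -> V) :
  {morph h : x y / x + y} -> forall x k, h (x *~ k) = h x *~ k.
Proof.
move=> hD; have h0 := additive0 hD.
have hN x : h (- x) = - h x.
  by apply/eqP; rewrite -subr_eq0 opprK -hD addNr h0.
have hMn x n : h (x *+ n) = h x *+ n.
  by elim: n => [|n IHn]; rewrite ?mulr0n // !mulrS hD IHn.
by move=> x [n|n] /=; rewrite ?hN hMn.
Qed.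

Variables (G : groupType) (V : zmodType).

Lemma morph1_eq0 (h : G -> V) : {morph h : x y / (x * y)%g >-> x + y} -> h 1%g = 0.
Proof. by move=> hM; apply: (addrI (h 1%g)); rewrite -hM mulg1 addr0. Qed.

Lemma morph_zexpg (h : G -> V) :
  {morph h : x y / (x * y)%g >-> x + y} ->
  forall g k, h (zexpg g k) = h g *~ k.
Proof.
move=> hM; have h1 := morph1_eq0 hM.
have hV g : h g^-1%g = - h g.
  by apply/eqP; rewrite -addr_eq0 -hM mulVg h1.
have hXn g n : h (g ^+ n)%g = h g *+ n.
  by elim: n => [|n IHn]; rewrite ?mulr0n // expgS mulrS hM IHn.
by move=> g [n|n] /=; rewrite ?hV hXn.
Qed.

Lemma zexpg_morph (h : V -> G) :
  {morph h : x y / x + y >-> (x * y)%g} ->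
  forall v k, h (v *~ k) = zexpg (h v) k.
Proof.
move=> hD; have h0 : h 0 = 1%g.
  by apply: (@mulgI _ (h 0)); rewrite -hD addr0 mulg1.
have hN v : h (- v) = (h v)^-1%g.
  by symmetry; apply: mulg1_eq; rewrite -hD subrr.
have hMn v n : h (v *+ n) = (h v ^+ n)%g.
  by elim: n => [|n IHn]; rewrite ?mulr0n // mulrS hD IHn expgS.
by move=> v [n|n] /=; rewrite ?hN hMn.
Qed.

Lemma morph_zprod (h : G -> V) :
  {morph h : x y / (x * y)%g >-> x + y} ->
  forall n (a : 'I_n -> G) k, h (zprod a k) = \sum_i h (a i) *~ k i.
Proof.
move=> hM n a k; rewrite /zprod -big_enum /=.
elim: (enum _) => [|j s IHs] /=; last by rewrite big_cons hM IHs morph_zexpg.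
by rewrite big_nil morph1_eq0.
Qed.

Lemma faithful_int_action (v : V) :
  (forall k, v *~ k = 0 -> k = 0) -> faithful_endo_action (fun k (u : V) => u *~ k).
Proof.
move=> v_free; split=> [k u w|u|k l u|k l u|k l eq_kl] /=.
- exact: mulrzDl.
- exact: mulr1z.
- exact: mulrzDr.
- by rewrite mulrC mulrzA.
- by apply/subr0_eq/v_free; rewrite mulrzBr eq_kl subrr.
Qed.

End IntegerMultiples.

Section ScalarsOfBiadditiveForm.
Local Open Scope ring_scope.
Variables (M N : zmodType) (f : M -> M -> N).
Hypothesis fDl : forall w, {morph f^~ w : u v / u + v}.
Hypothesis fDr : forall u, {morph f u : v w / v + w}.
Hypothesis f_alt : forall u, f u u = 0.
Hypothesis N_torsion_free : forall (v : N) (k : int), k != 0 -> v *~ k = 0 -> v = 0.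
Variables (I : finType) (x : I -> M).
Hypothesis x_span : forall u, exists k : I -> int, u = \sum_i x i *~ k i.
Hypothesis x_centralizer : forall i u, f (x i) u = 0 -> exists t, u = x i *~ t.
Hypothesis x_noncommuting : forall i j, i != j -> f (x i) (x j) != 0.

Lemma formMzl u v k : f (u *~ k) v = f u v *~ k.
Proof. exact: (additive_mulrz (fDl v)). Qed.

Lemma formMzr u v k : f u (v *~ k) = f u v *~ k.
Proof. exact: (additive_mulrz (fDr u)). Qed.

Lemma form_mulrz_eq0 i j : i != j -> forall k, f (x i) (x j) *~ k = 0 -> k = 0.
Proof.
move=> ij k fk0; apply/eqP; apply: contraTT (x_noncommuting ij) => k0.
by rewrite negbK (N_torsion_free k0 fk0).
Qed.

Section CompatibleEndomorphisms.
Variables (phi : M -> M) (psi : N -> N).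
Hypotheses (phiD : {morph phi : u v / u + v}) (psiD : {morph psi : u v / u + v}).
Hypothesis phi_compat :
  forall u v, f (phi u) v = psi (f u v) /\ f u (phi v) = psi (f u v).

Lemma compatible_scales_generator i : exists t, phi (x i) = x i *~ t.
Proof.
apply: x_centralizer.
by rewrite (phi_compat _ _).2 f_alt (additive0 psiD).
Qed.

Lemma compatible_scale_unique i j s t :
  i != j -> phi (x i) = x i *~ s -> phi (x j) = x j *~ t -> s = t.
Proof.
move=> ij phi_i phi_j; apply/subr0_eq/(form_mulrz_eq0 ij).
case: (phi_compat (x i) (x j)); rewrite phi_i phi_j formMzl formMzr => Es Et.
by rewrite mulrzBr Es Et subrr.
Qed.

Lemma compatible_is_mulrz : exists t, forall u, phi u = u *~ t.
Proof.
have [i0 _ | I0] := pickP (@predT I); last first.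
  exists 0 => u; have [k ->] := x_span u.
  by rewrite big_pred0 // (additive0 phiD) mul0rz.
have [t phi_i0] := compatible_scales_generator i0.
have phi_x i : phi (x i) = x i *~ t.
  have [s phi_i] := compatible_scales_generator i.
  have [-> // | i_i0] := eqVneq i i0.
  by rewrite phi_i (compatible_scale_unique i_i0 phi_i phi_i0).
exists t => u; have [k ->] := x_span u.
rewrite (big_morph phi phiD (additive0 phiD)) mulrz_suml.
by apply: eq_bigr => i _; rewrite (additive_mulrz phiD) phi_x mulrzAC.
Qed.

End CompatibleEndomorphisms.

Lemma int_ring_of_scalars (i j : I) : i != j ->
  ring_of_scalars f (fun k (u : M) => u *~ k) (fun k (v : N) => v *~ k).
Proof.
move=> ij; split.
- apply: (@faithful_int_action _ (x i)) => k xk0.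
  by apply: (form_mulrz_eq0 ij); rewrite -formMzl xk0 (additive0 (fDl _)).
- exact: (faithful_int_action (form_mulrz_eq0 ij)).
- by move=> k u v; rewrite formMzl formMzr.
Qed.

Lemma int_maximal_ring_of_scalars (i j : I) : i != j ->
  exists (actMZ : int -> M -> M) (actNZ : int -> N -> N),
    ring_of_scalars f actMZ actNZ /\
    forall (R : comPzRingType) (actM : R -> M -> M) (actN : R -> N -> N),
      ring_of_scalars f actM actN ->
      forall r : R, exists k : int, forall u : M, actM r u = actMZ k u.
Proof.
move=> ij; exists (fun k u => u *~ k), (fun k v => v *~ k).
split; first exact: int_ring_of_scalars ij.
move=> R actM actN [[phiD _ _ _ _] [psiD _ _ _ _] compat] r.
exact: (compatible_is_mulrz (phiD r) (psiD r) (compat r)).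
Qed.

End ScalarsOfBiadditiveForm.

Section CommutatorForm.
Local Open Scope ring_scope.
Variables (G : groupType) (M N : zmodType).
Variables (pi : G -> M) (iota : N -> G) (f : M -> M -> N).
Hypothesis commg_central : forall x y : G, central [~ x, y]%g.
Hypothesis pi_quo : quotient_by_center pi.
Hypothesis iota_der : presents_derived iota.
Hypothesis f_commg : forall g h, iota (f (pi g) (pi h)) = [~ g, h]%g.

Lemma pi_surj u : exists g, pi g = u.
Proof. by case: pi_quo. Qed.

Lemma pi_zexpg g k : pi (zexpg g k) = pi g *~ k.
Proof. by case: pi_quo => piM _ _; apply: morph_zexpg. Qed.

Lemma iota_zexpg v k : iota (v *~ k) = zexpg (iota v) k.
Proof. by case: iota_der => iotaD _ _; apply: zexpg_morph. Qed.

Lemma iota_inj : injective iota.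
Proof. by case: iota_der. Qed.

Lemma iota0 : iota 0 = 1%g.
Proof. by rewrite -(mulr0z 0) iota_zexpg. Qed.

Lemma form_eq0 g h : f (pi g) (pi h) = 0 <-> [~ g, h]%g = 1%g.
Proof.
split=> [fgh0 | gh1]; first by rewrite -f_commg fgh0 iota0.
by apply: iota_inj; rewrite f_commg iota0.
Qed.

Lemma form_addl w : {morph f^~ w : u v / u + v}.
Proof.
case: pi_quo => piM _ _ u v.
have [g <-] := pi_surj u; have [g' <-] := pi_surj v; have [h <-] := pi_surj w.
by apply: iota_inj; case: iota_der => iotaD _ _; rewrite -piM iotaD !f_commg commMg.
Qed.

Lemma form_addr u : {morph f u : v w / v + w}.
Proof.
case: pi_quo => piM _ _ v w.
have [g <-] := pi_surj u; have [h <-] := pi_surj v; have [h' <-] := pi_surj w.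
by apply: iota_inj; case: iota_der => iotaD _ _; rewrite -piM iotaD !f_commg commgM.
Qed.

Lemma form_alt u : f u u = 0.
Proof. by have [g <-] := pi_surj u; apply/form_eq0/commgg. Qed.

Lemma derived_torsion_free :
  torsion_free G -> forall (v : N) (k : int), k != 0 -> v *~ k = 0 -> v = 0.
Proof.
move=> G_tf v k /eqP k0 vk0; apply: iota_inj; rewrite iota0.
by apply: (G_tf _ k k0); rewrite -iota_zexpg vk0 iota0.
Qed.

Lemma c_small_form_centralizer g :
  c_small g -> forall u, f (pi g) u = 0 -> exists t, u = pi g *~ t.
Proof.
move=> g_small u; have [h <-] := pi_surj u => /form_eq0 /eqP /commgP gh.
have [t [z [z_central ->]]] := (g_small h).1 (esym gh).
case: pi_quo => piM _ pi0; exists t.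
by rewrite piM pi_zexpg ((pi0 z).2 z_central) addr0.
Qed.

Lemma malcev_span n m (a : 'I_n -> G) (c : 'I_m -> G) :
  malcev_basis a c -> forall u, exists k : 'I_n -> int, u = \sum_i pi (a i) *~ k i.
Proof.
case=> _ _ c_central a_gen _ u; have [g <-] := pi_surj u.
have [k ck] := a_gen g; exists k.
case: pi_quo => piM _ pi0.
rewrite -(morph_zprod piM) -[g](mulVKg (zprod a k)) piM.
by rewrite ((pi0 _).2 (c_central _ ck)) addr0.
Qed.

End CommutatorForm.

Theorem theorem3p3 (G : groupType) (n m : nat)
    (a : 'I_n -> G) (c : 'I_m -> G)
    (Hfg : finitely_generated G) (Htf : torsion_free G)
    (Hnil : two_step_nilpotent G)
    (HAC : malcev_basis a c) (Hn : 2 <= n)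
    (Hcomm : forall i j : 'I_n, i <> j -> monoid.commg (a i) (a j) <> monoid.one)
    (Hsmall : forall i : 'I_n, c_small (a i))
    (M N : zmodType) (pi : G -> M) (iota : N -> G)
    (Hpi : quotient_by_center pi) (Hiota : presents_derived iota)
    (f : M -> M -> N)
    (Hf : forall g h : G, iota (f (pi g) (pi h)) = monoid.commg g h) :
  exists (actMZ : int -> M -> M) (actNZ : int -> N -> N),
    ring_of_scalars f actMZ actNZ /\
    forall (R : comPzRingType) (actM : R -> M -> M) (actN : R -> N -> N),
      ring_of_scalars f actM actN ->
      forall r : R, exists k : int, forall x : M, actM r x = actMZ k x.
Proof.
have [commg_central _] := Hnil.
pose i0 : 'I_n := Ordinal (ltnW Hn); pose i1 : 'I_n := Ordinal Hn.
apply: (int_maximal_ring_of_scalars (form_addl commg_central Hpi Hiota Hf)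
  (form_addr commg_central Hpi Hiota Hf) (form_alt Hpi Hiota Hf)
  (derived_torsion_free Hiota Htf) (malcev_span Hpi HAC) _ _ (isT : i0 != i1)).
- by move=> i; apply: (c_small_form_centralizer Hpi Hiota Hf (Hsmall i)).
- by move=> i j /eqP ij; apply/eqP => /(form_eq0 Hiota Hf); apply: Hcomm.
Qed.
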